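(* Let $d\in\mathbb{N}$ and let $G$ be a countably infinite $d$-degenerate graph. Then $G$ does not contain $d+1$ pairwise disjoint minimal ruling sets; that is, $\mathrm{rul}(G)\le d$.
   Context: A countably infinite graph $G$ is $d$-degenerate if there is an enumeration $v_1,v_2,\dots$ of $V(G)$ (indexed by $\mathbb{N}$) such that each $v_i$ has at most $d$ neighbors in $\{v_1,\dots,v_{i-1}\}$. A set $X\subseteq V(G)$ is ruling if $X$ is finite and all but finitely many vertices of $V(G)\setminus X$ have a neighbor in $X$; a minimal ruling set is a ruling set no proper subset of which is ruling. $\mathrm{rul}(G)$ is the smallest $t\in\{0,1,2,\dots\}$ such that $G$ has at most $t$ pairwise disjoint minimal ruling sets ($\infty$ if no such $t$ exists). *)

From mathcomp Require Import all_boot.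
Set Implicit Arguments. Unset Strict Implicit. Unset Printing Implicit Defensive.

(* A countably infinite simple graph, with vertex set identified with nat
   (any countably infinite vertex set is in bijection with nat). *)
Definition simple_graph (adj : rel nat) : Prop :=
  (forall x y, adj x y = adj y x) /\ (forall x, ~~ adj x x).

Definition degenerate (adj : rel nat) (d : nat) : Prop :=
  exists v : nat -> nat, bijective v /\
    forall i, \sum_(j < i) adj (v i) (v j) <= d.

(* Ruling set: a finite set X (given by a list) such that all but finitely
   many vertices outside X have a neighbour in X. *)
Definition ruling (adj : rel nat) (X : seq nat) : Prop :=
  exists N, forall u, N <= u -> u \notin X -> exists2 x, x \in X & adj u x.

Definition minimal_ruling (adj : rel nat) (X : seq nat) : Prop :=
  ruling adj X /\
  forall Y : seq nat, {subset Y <= X} -> ~ {subset X <= Y} -> ~ ruling adj Y.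

Definition rul_le (adj : rel nat) (t : nat) : Prop :=
  ~ exists F : 'I_t.+1 -> seq nat,
      (forall i, minimal_ruling adj (F i)) /\
      (forall i j, i != j -> forall x, x \in F i -> x \notin F j).

From mathcomp Require Import all_boot zify.
Set Implicit Arguments. Unset Strict Implicit. Unset Printing Implicit Defensive.

(* A countably infinite d-degenerate graph has no d+1 pairwise disjoint
   ruling sets, let alone minimal ones.  Fix an enumeration v with inverse
   w witnessing d-degeneracy, and d+1 disjoint ruling sets F_0, ..., F_d.
   Finitely many sets each dominate all vertices beyond some threshold, so
   they share a threshold N (eventually_all).  Finitely many vertices lie in
   the sets, so a single bound B controls both their labels and their
   positions w x (family_bound).  Only finitely many vertices occur at
   positions <= B, so some vertex u >= N + B.+1 sits at a position > B
   (late_vertex).  Then u lies in no F_i, hence has a neighbour x_i in each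
   F_i (first_neighbour); the x_i are distinct by disjointness and all
   precede u in the enumeration, giving u d+1 earlier neighbours, which
   contradicts degeneracy (earlier_neighbours_le). *)

Lemma eventually_all (I : finType) (P : I -> nat -> Prop) :
  (forall i, exists N, forall u, N <= u -> P i u) ->
  exists N, forall i u, N <= u -> P i u.
Proof.
move=> HP.
suff [N HN] : exists N, forall i, i \in enum I -> forall u, N <= u -> P i u.
  by exists N => i; apply: HN; rewrite mem_enum.
elim: (enum I) => [|a s [N IH]]; first by exists 0.
have [Na Ha] := HP a.
exists (maxn Na N) => i; rewrite inE => /predU1P [-> | /IH Hs] u.
  by rewrite geq_max => /andP [/Ha].
by rewrite geq_max => /andP [_ /Hs].
Qed.

Lemma family_bound (I : finType) (F : I -> seq nat) (f : nat -> nat) :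
  exists B, forall i x, x \in F i -> f x <= B.
Proof.
exists (\max_i \max_(x <- F i) f x) => i x Hx.
apply: leq_trans (leq_bigmax i).
exact: (leq_bigmax_seq x Hx isT).
Qed.

Definition first_neighbour (adj : rel nat) (u : nat) (X : seq nat) : nat :=
  nth 0 X (find (adj u) X).

Lemma first_neighbourP (adj : rel nat) (u : nat) (X : seq nat) :
  (exists2 x, x \in X & adj u x) ->
  first_neighbour adj u X \in X /\ adj u (first_neighbour adj u X).
Proof.
move=> [x Hx Hux]; have HX : has (adj u) X by apply/hasP; exists x.
by split; [rewrite mem_nth // -has_find | apply: nth_find].
Qed.

Section Enumeration.

(* An enumeration v of the vertices, with inverse w giving positions. *)
Variables (v w : nat -> nat).
Hypothesis wv : cancel w v.

(* Beyond any threshold M there is a vertex at a position beyond any K: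
   the vertices at positions <= K are v 0, ..., v K, all below the bound. *)
Lemma late_vertex (K M : nat) : exists2 u, M <= u & K < w u.
Proof.
exists (M + (\max_(j < K.+1) v j).+1); first exact: leq_addr.
rewrite ltnNge; apply/negP => Hle.
have := leq_bigmax (F := fun j : 'I_K.+1 => v j) (Ordinal (Hle : w _ < K.+1)).
by rewrite /= wv; lia.
Qed.

Lemma earlier_neighbours_le (adj : rel nat) (d : nat) :
  (forall i, \sum_(j < i) adj (v i) (v j) <= d) ->
  forall (I : finType) (f : I -> nat) (u : nat), injective f ->
  (forall i, adj u (f i) /\ w (f i) < w u) -> #|I| <= d.
Proof.
move=> Hdeg I f u f_inj Hf.
pose g i : 'I_(w u) := Ordinal (proj2 (Hf i)).
have g_inj : injective g.
  by move=> i j /(congr1 (v \o val)) /=; rewrite !wv => /f_inj.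
have earlier_card : #|[pred j : 'I_(w u) | adj u (v j)]| <= d.
  apply: leq_trans (Hdeg (w u)); rewrite wv -sum1_card big_mkcond /=.
  by apply: leq_sum => j _; rewrite inE; case: (adj u (v j)).
apply: leq_trans earlier_card; rewrite -(card_image g_inj).
apply: subset_leq_card; apply/subsetP => _ /imageP [i _ ->].
by rewrite inE /= wv (proj1 (Hf i)).
Qed.

End Enumeration.

Theorem mainTheorem4 (d : nat) (adj : rel nat) :
  simple_graph adj -> degenerate adj d -> rul_le adj d.
Proof.
move=> _ [v [[w _ wv] Hdeg]] [F [Hmin Hdisj]].
have [N HN] : exists N, forall i u, N <= u -> u \notin F i ->
    exists2 x, x \in F i & adj u x.
  by apply: eventually_all => i; have [] := Hmin i.
have [B HB] := family_bound F (fun x => maxn x (w x)).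
have [u Hu HBu] := late_vertex wv B (N + B.+1).
have u_out i : u \notin F i.
  by apply/negP => /HB; rewrite geq_max => /andP [Hle _]; lia.
pose x i := first_neighbour adj u (F i).
have Hx i : x i \in F i /\ adj u (x i).
  by apply: first_neighbourP; apply: HN (u_out i); lia.
have x_inj : injective x.
  move=> i j Hij; apply/eqP; apply: contraT => /Hdisj /(_ (x i) (proj1 (Hx i))).
  by rewrite Hij (proj1 (Hx j)).
suff : #|'I_d.+1| <= d by rewrite card_ord ltnn.
apply: (earlier_neighbours_le wv Hdeg x_inj (u := u)) => i.
split; first exact: (proj2 (Hx i)).
by have := HB i _ (proj1 (Hx i)); rewrite geq_max => /andP [_]; lia.
Qed.
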